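(* Let $n\ge 2$, let $\gamma: I\to S^n$ be a spherical unit speed curve, let $P\in S^n$ and let $s_0\in I$. Then: (1) If $P\neq \pm\mathbf{u}_n(s_0)$, then the spherical pedal curve-germ $ped_{\gamma,P}:(I,s_0)\to S^n$ is well-defined and the spherical orthotomic curve-germ $ort_{\gamma,P}:(I,s_0)\to S^n$ is $\mathcal{L}$-equivalent to it. (If $P=\pm\mathbf{u}_n(s_0)$, the germ $ped_{\gamma,P}$ at $s_0$ is not defined.) (2) If $P=\pm\mathbf{u}_n(s_0)$, then $ort_{\gamma,P}:(I,s_0)\to S^n$ is $\mathcal{L}$-equivalent to the spherical dual curve-germ $\mathbf{u}_n:(I,s_0)\to S^n$.
   Context: $I\subset\mathbb{R}$ is an open interval and $S^n$ the unit sphere in $\mathbb{R}^{n+1}$; the dot denotes the Euclidean inner product. A regular curve $\gamma:I\to S^n$ is a spherical unit speed curve if, setting $\mathbf{u}_{-1}\equiv\mathbf{0}$, $\mathbf{u}_0=\gamma$, $\|\mathbf{u}_0'\|\equiv 1$, $\kappa_0\equiv 0$, the maps $\mathbf{u}_i(s)=\dfrac{\mathbf{u}_{i-1}'(s)+\kappa_{i-1}(s)\mathbf{u}_{i-2}(s)}{\|\mathbf{u}_{i-1}'(s)+\kappa_{i-1}(s)\mathbf{u}_{i-2}(s)\|}$ with $\kappa_i(s)=\|\mathbf{u}_{i-1}'(s)+\kappa_{i-1}(s)\mathbf{u}_{i-2}(s)\|>0$ are well-defined for $1\le i\le n-1$ and all $s\in I$. Then $\mathbf{u}_0(s),\dots,\mathbf{u}_{n-1}(s)$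 are orthonormal, and the spherical dual curve $\mathbf{u}_n:I\to S^n$ is defined by requiring $\mathbf{u}_0(s),\dots,\mathbf{u}_n(s)$ orthonormal with $\det(\mathbf{u}_0(s),\dots,\mathbf{u}_n(s))=1$; also $\kappa_n(s)=\mathbf{u}_{n-1}'(s)\cdot\mathbf{u}_n(s)$. For $P\in S^n$ with $P\cdot\mathbf{u}_n(s)\neq\pm1$, the spherical pedal curve is $ped_{\gamma,P}(s)=\dfrac{P-(P\cdot\mathbf{u}_n(s))\mathbf{u}_n(s)}{\sqrt{1-(P\cdot\mathbf{u}_n(s))^2}}$ (equivalently the normalization of $\sum_{i=0}^{n-1}(P\cdot\mathbf{u}_i(s))\mathbf{u}_i(s)$). For any $P\in S^n$ the spherical orthotomic curve is $ort_{\gamma,P}(s)=\sum_{i=0}^{n-1}(P\cdot\mathbf{u}_i(s))\mathbf{u}_i(s)-(P\cdot\mathbf{u}_n(s))\mathbf{u}_n(s)=P-2(P\cdot\mathbf{u}_n(s))\mathbf{u}_n(s)$. Two curve-germs $f,g:(I,s_0)\to S^n$ are $\mathcal{L}$-equivalent if there is a germ of $C^\infty$ diffeomorphism $\psi:(S^n,f(s_0))\to(S^n,g(s_0))$ with $g=\psi\circ f$ as germs. *)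

From Stdlib Require Import Reals Lra Lia List.
Open Scope R_scope.

(* Vectors of R^N are represented as functions nat -> R; only the
   coordinates 0 .. N-1 are meaningful. *)
Definition vec := nat -> R.

Fixpoint sumN (k : nat) (f : nat -> R) : R :=
  match k with O => 0 | S k' => sumN k' f + f k' end.

Definition dot (N : nat) (x y : vec) : R := sumN N (fun k => x k * y k).
Definition vnorm (N : nat) (x : vec) : R := sqrt (dot N x x).
Definition vzero : vec := fun _ => 0.
Definition vadd (x y : vec) : vec := fun k => x k + y k.
Definition vscale (a : R) (x : vec) : vec := fun k => a * x k.
Definition vopp (x : vec) : vec := vscale (-1) x.
Definition vsub (x y : vec) : vec := fun k => x k - y k.
Definition veq (N : nat) (x y : vec) : Prop := forall k, (k < N)%nat -> x k = y k.
Definition vdist (N : nat) (x y : vec) : R := vnorm N (vsub x y).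
Definition ebasis (i : nat) : vec := fun k => if Nat.eqb k i then 1 else 0.

Definition on_sphere (N : nat) (x : vec) : Prop := dot N x x = 1.

Definition ball (N : nat) (a : vec) (r : R) (x : vec) : Prop := vdist N x a < r.

Fixpoint det (k : nat) (M : nat -> nat -> R) : R :=
  match k with
  | O => 1
  | S k' => sumN (S k') (fun j =>
        (-1) ^ j * M O j * det k' (fun r c => M (S r) (if Nat.ltb c j then c else S c)))
  end.

Definition is_open_interval (I : R -> Prop) : Prop :=
  (exists x, I x) /\
  (forall x y z, I x -> I z -> x <= y <= z -> I y) /\
  (forall x, I x -> exists eps, eps > 0 /\ forall y, Rabs (y - x) < eps -> I y).

Definition smooth_fun_on (I : R -> Prop) (f : R -> R) : Prop :=
  exists ds : nat -> R -> R,
    (forall s, I s -> ds O s = f s) /\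
    (forall k s, I s -> derivable_pt_lim (ds k) s (ds (S k) s)).

Definition smooth_curve (N : nat) (I : R -> Prop) (c : R -> vec) : Prop :=
  forall k, (k < N)%nat -> smooth_fun_on I (fun s => c s k).

Definition vderiv (N : nat) (c : R -> vec) (s : R) (d : vec) : Prop :=
  forall k, (k < N)%nat -> derivable_pt_lim (fun t => c t k) s (d k).

(* C^infinity real function on an open set U of R^N: all iterated partial
   derivatives D l (l = list of directions) exist on U and are continuous. *)
Definition smooth_map_on (N : nat) (U : vec -> Prop) (h : vec -> R) : Prop :=
  exists D : list nat -> vec -> R,
    (forall x, U x -> D nil x = h x) /\
    (forall l i x, (i < N)%nat -> U x ->
        derivable_pt_lim (fun t => D l (vadd x (vscale t (ebasis i)))) 0 (D (i :: l) x)) /\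
    (forall l x, U x -> forall e, e > 0 -> exists d, d > 0 /\
        forall y, U y -> vdist N y x < d -> Rabs (D l y - D l x) < e).

Definition smooth_vmap_on (N : nat) (U : vec -> Prop) (h : vec -> vec) : Prop :=
  forall k, (k < N)%nat -> smooth_map_on N U (fun x => h x k).

(* psi is (a representative of) a germ of C^infinity diffeomorphism
   (S^{N-1}, a) -> (S^{N-1}, b): S^{N-1} is a submanifold of R^N, so smooth
   maps on it near a point are restrictions of smooth ambient maps. *)
Definition sphere_diffeo_germ (N : nat) (a b : vec) (psi : vec -> vec) : Prop :=
  exists (phi : vec -> vec) (r1 r2 : R),
    r1 > 0 /\ r2 > 0 /\
    smooth_vmap_on N (ball N a r1) psi /\
    smooth_vmap_on N (ball N b r2) phi /\
    veq N (psi a) b /\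
    (forall x, on_sphere N x -> ball N a r1 x ->
        on_sphere N (psi x) /\ veq N (phi (psi x)) x) /\
    (forall y, on_sphere N y -> ball N b r2 y ->
        on_sphere N (phi y) /\ veq N (psi (phi y)) y).

Definition L_equiv (N : nat) (I : R -> Prop) (s0 : R) (f g : R -> vec) : Prop :=
  exists psi : vec -> vec,
    sphere_diffeo_germ N (f s0) (g s0) psi /\
    exists eps, eps > 0 /\
      forall s, I s -> Rabs (s - s0) < eps -> veq N (g s) (psi (f s)).

(* u_{i-2}, with the convention u_{-1} = 0 *)
Definition u_m2 (u : nat -> R -> vec) (i : nat) (s : R) : vec :=
  match i with S (S j) => u j s | _ => vzero end.

Definition spherical_frame (n : nat) (I : R -> Prop) (gamma : R -> vec)
    (u : nat -> R -> vec) (kappa : nat -> R -> R) : Prop :=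
  (forall s, I s -> veq (S n) (u O s) (gamma s)) /\
  (forall s, I s -> kappa O s = 0) /\
  (forall s, I s -> exists d, vderiv (S n) gamma s d /\ vnorm (S n) d = 1) /\
  (forall i s, (1 <= i <= n - 1)%nat -> I s ->
     exists d, vderiv (S n) (u (i - 1)%nat) s d /\
       let w := vadd d (vscale (kappa (i - 1)%nat s) (u_m2 u i s)) in
       kappa i s = vnorm (S n) w /\ kappa i s > 0 /\
       veq (S n) (u i s) (vscale (/ kappa i s) w)) /\
  (forall s, I s ->
     (forall i j, (i <= n)%nat -> (j <= n)%nat ->
        dot (S n) (u i s) (u j s) = if Nat.eqb i j then 1 else 0) /\
     det (S n) (fun r c => u c s r) = 1).

Definition pedal (N : nat) (un : R -> vec) (P : vec) (s : R) : vec :=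
  vscale (/ sqrt (1 - (dot N P (un s)) ^ 2))
         (vsub P (vscale (dot N P (un s)) (un s))).

Definition orthotomic (N : nat) (un : R -> vec) (P : vec) (s : R) : vec :=
  vsub P (vscale (2 * dot N P (un s)) (un s)).

From Stdlib Require Import Reals Lra Lia FunctionalExtensionality.
From mathcomp Require all_boot all_algebra Rstruct.
Open Scope R_scope.

(* Write c(s) = P . u_n(s).  The orthotomic curve is ort(s) = P - 2 c(s) u_n(s);
   it is the image of u_n(s) under the map  y |-> P - 2 (P.y) y.  For signs
   tau, eps = +-1 consider the pair of maps of R^(n+1)
       chart(x) = eps (x + tau P) / |x + tau P|,    refl(y) = tau (2 (P.y) y - P).
   They are smooth where defined and mutually inverse between
   {x in S^n | x + tau P <> 0} and {y in S^n | eps tau (P.y) > 0}, so chart is a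
   germ of diffeomorphism of S^n at every point of the first set.
   (1) If P <> +-u_n(s0) then c(s0)^2 < 1, and chart with tau = eps = 1 maps
       ort(s) to the pedal point (P - c u_n)/sqrt(1 - c^2) for s near s0.
   (2) If P = sg u_n(s0), sg = +-1, then chart with tau = -1, eps = -sg maps
       ort(s) = refl(u_n(s)) back to u_n(s) for s near s0.
   "Near s0" needs continuity of c.  The frame vectors u_0 .. u_{n-1} are
   C^infinity by their recursive definition, and u_n is the cofactor vector of
   u_0 .. u_{n-1} (the matrix of an orthonormal frame of determinant 1 is the
   transpose of its adjugate), hence continuous. *)

Lemma sumN_ext N f g : (forall k, (k < N)%nat -> f k = g k) -> sumN N f = sumN N g.
Proof.
  induction N as [|N IH]; intros H; simpl; auto.
  rewrite IH, H; auto.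
Qed.

Lemma sumsq_ge N (f : nat -> R) k : (k < N)%nat -> f k * f k <= sumN N (fun j => f j * f j).
Proof.
  assert (Hnn : forall M, 0 <= sumN M (fun j => f j * f j)).
  { induction M; simpl; [lra|]. pose proof (Rle_0_sqr (f M)). unfold Rsqr in *. lra. }
  induction N as [|N IH]; intros Hk; simpl; [lia|].
  pose proof (Rle_0_sqr (f N)). unfold Rsqr in *.
  destruct (Nat.eq_dec k N) as [->|Hne].
  - specialize (Hnn N). lra.
  - specialize (IH ltac:(lia)). lra.
Qed.

Lemma dot_sym N x y : dot N x y = dot N y x.
Proof. unfold dot; apply sumN_ext; intros; ring. Qed.

Lemma dot_veq N x x' y y' : veq N x x' -> veq N y y' -> dot N x y = dot N x' y'.
Proof. intros Hx Hy. unfold dot. apply sumN_ext. intros k Hk. rewrite Hx, Hy; auto. Qed.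

Lemma dot_comb N (x y : vec) a b :
  dot N (fun j => a * x j + b * y j) (fun j => a * x j + b * y j) =
  a * a * dot N x x + 2 * a * b * dot N x y + b * b * dot N y y.
Proof. unfold dot; induction N; simpl; [ring|]. rewrite IHN; ring. Qed.

Lemma dot_lin N (z x y : vec) a b :
  dot N z (fun j => a * x j + b * y j) = a * dot N z x + b * dot N z y.
Proof. unfold dot; induction N; simpl; [ring|]. rewrite IHN; ring. Qed.

Lemma dot_self_nonneg N (x : vec) : 0 <= dot N x x.
Proof.
  unfold dot; induction N; simpl; [lra|]. pose proof (Rle_0_sqr (x N)). unfold Rsqr in *. lra.
Qed.

Lemma dot_zero N (z : vec) : dot N z z = 0 -> forall k, (k < N)%nat -> z k = 0.
Proof.
  intros H k Hk. pose proof (sumsq_ge N z k Hk) as H1. unfold dot in H. rewrite H in H1.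
  pose proof (Rle_0_sqr (z k)). unfold Rsqr in *. nra.
Qed.

Lemma dot_pos_coord N (z : vec) : dot N z z > 0 -> exists k, (k < N)%nat /\ z k <> 0.
Proof.
  induction N; unfold dot; simpl; intros H; [lra|].
  destruct (Req_dec (z N) 0) as [E|E].
  - rewrite E in H. destruct IHN as [k [Hk Hz]]; [unfold dot; lra|]. exists k; split; auto.
  - exists N; split; auto.
Qed.

Lemma coord_le N (x y : vec) k : (k < N)%nat -> Rabs (y k - x k) <= vdist N y x.
Proof.
  intros Hk. unfold vdist, vnorm, dot, vsub.
  rewrite <- sqrt_Rsqr_abs. apply sqrt_le_1_alt. unfold Rsqr.
  apply (sumsq_ge N (fun j => y j - x j)); auto.
Qed.

Lemma abs_dot_le N (P z : vec) B : dot N P P = 1 ->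
  (forall k, (k < N)%nat -> Rabs (z k) <= B) -> Rabs (dot N P z) <= INR N * B.
Proof.
  intros HP Hz. assert (HPk : forall k, (k < N)%nat -> Rabs (P k) <= 1).
  { intros k Hk. pose proof (sumsq_ge N P k Hk) as H1. unfold dot in HP. rewrite HP in H1.
    apply Rabs_le. nra. }
  clear HP. unfold dot. induction N as [|N IH]; simpl sumN.
  - rewrite Rabs_R0; simpl; lra.
  - rewrite S_INR. eapply Rle_trans; [apply Rabs_triang|].
    pose proof (IH ltac:(intros; apply Hz; lia) ltac:(intros; apply HPk; lia)).
    assert (0 <= B) by (eapply Rle_trans; [apply Rabs_pos|apply (Hz N); lia]).
    assert (Rabs (P N) * Rabs (z N) <= 1 * B)
      by (apply Rmult_le_compat; try apply Rabs_pos; [apply HPk|apply Hz]; lia).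
    rewrite Rabs_mult. lra.
Qed.

Lemma dot_near N (P b y : vec) r : dot N P P = 1 -> vdist N y b < r ->
  Rabs (dot N P y - dot N P b) <= INR N * r.
Proof.
  intros HP Hy.
  replace (dot N P y - dot N P b) with (dot N P (vsub y b)).
  - apply abs_dot_le; auto. intros k Hk.
    left. eapply Rle_lt_trans; [apply coord_le; eauto|auto].
  - unfold dot at 1. rewrite (sumN_ext _ _ (fun j => P j * (1 * y j + (-1) * b j))).
    + fold (dot N P (fun j => 1 * y j + (-1) * b j)). rewrite dot_lin. ring.
    + intros; unfold vsub; ring.
Qed.

(** * Functions of class C^k on an open set of R *)

Fixpoint Ck (I : R -> Prop) (m : nat) (f : R -> R) : Prop :=
  match m with
  | O => True
  | S m' => exists f', (forall s, I s -> derivable_pt_lim f s (f' s)) /\ Ck I m' f'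
  end.

Section ClassCk.
Variable I : R -> Prop.
Hypothesis I_open : forall x, I x -> exists eps, eps > 0 /\ forall y, Rabs (y - x) < eps -> I y.

Lemma deriv_ext f g s l : I s -> (forall t, I t -> f t = g t) ->
  derivable_pt_lim f s l -> derivable_pt_lim g s l.
Proof.
  intros Hs Hfg H eps He. destruct (H eps He) as [d Hd].
  destruct (I_open s Hs) as [r [Hr Hy]].
  assert (Hm : 0 < Rmin d r) by (apply Rmin_pos; [apply cond_pos|lra]).
  exists (mkposreal _ Hm). intros h Hh Hlt. simpl in Hlt.
  rewrite <- !Hfg; auto.
  - apply Hd; auto. eapply Rlt_le_trans; [exact Hlt|apply Rmin_l].
  - apply Hy. replace (s + h - s) with h by ring.
    eapply Rlt_le_trans; [exact Hlt|apply Rmin_r].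
Qed.

Lemma Ck_ext m f g : (forall t, I t -> f t = g t) -> Ck I m f -> Ck I m g.
Proof.
  destruct m as [|m]; simpl; auto.
  intros Hfg [f' [Hd Hc]]. exists f'. split; auto.
  intros s Hs. eapply deriv_ext; eauto.
Qed.

Lemma Ck_mono m f : Ck I (S m) f -> Ck I m f.
Proof.
  revert f; induction m as [|m IH]; intros f; simpl; auto.
  intros [f' [Hd Hc]]. exists f'. split; auto.
Qed.

Lemma Ck_const m c : Ck I m (fun _ => c).
Proof.
  revert c; induction m as [|m IH]; intros c; simpl; auto.
  exists (fun _ => 0). split; auto. intros s _. apply (derivable_pt_lim_const c).
Qed.

Lemma Ck_plus m f g : Ck I m f -> Ck I m g -> Ck I m (fun s => f s + g s).
Proof.
  revert f g; induction m as [|m IH]; intros f g; simpl; auto.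
  intros [f' [Hf Hf']] [g' [Hg Hg']].
  exists (fun s => f' s + g' s). split; auto.
  intros s Hs. apply (derivable_pt_lim_plus f g); auto.
Qed.

Lemma Ck_mult m f g : Ck I m f -> Ck I m g -> Ck I m (fun s => f s * g s).
Proof.
  revert f g; induction m as [|m IH]; intros f g; simpl; auto.
  intros Hf0 Hg0.
  pose proof (Ck_mono m f Hf0). pose proof (Ck_mono m g Hg0).
  destruct Hf0 as [f' [Hf Hf']]. destruct Hg0 as [g' [Hg Hg']].
  exists (fun s => f' s * g s + f s * g' s). split.
  - intros s Hs. apply (derivable_pt_lim_mult f g); auto.
  - apply Ck_plus; apply IH; auto.
Qed.

Lemma Ck_inv m f : (forall s, I s -> f s <> 0) -> Ck I m f -> Ck I m (fun s => / f s).
Proof.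
  intros Hnz. revert f Hnz; induction m as [|m IH]; intros f Hnz; simpl; auto.
  intros Hf0. pose proof (Ck_mono m f Hf0).
  destruct Hf0 as [f' [Hf Hf']].
  exists (fun s => (-1) * f' s * (/ f s * / f s)). split.
  - intros s Hs.
    pose proof (derivable_pt_lim_div (fun _ => 1) f s 0 (f' s)
                  (derivable_pt_lim_const 1 s) (Hf s Hs) (Hnz s Hs)) as Hd.
    replace ((-1) * f' s * (/ f s * / f s)) with ((0 * f s - f' s * 1) / (f s)²).
    + eapply deriv_ext; [exact Hs| |exact Hd]. intros t _. unfold div_fct, Rdiv. ring.
    + unfold Rsqr; field; auto.
  - apply Ck_mult; [apply Ck_mult; auto; apply Ck_const|].
    apply Ck_mult; apply IH; auto.
Qed.

Lemma Ck_sqrt m f : (forall s, I s -> f s > 0) -> Ck I m f -> Ck I m (fun s => sqrt (f s)).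
Proof.
  intros Hp. revert f Hp; induction m as [|m IH]; intros f Hp; simpl; auto.
  intros Hf0. pose proof (Ck_mono m f Hf0).
  destruct Hf0 as [f' [Hf Hf']].
  exists (fun s => f' s * (/ 2 * / sqrt (f s))). split.
  - intros s Hs.
    pose proof (derivable_pt_lim_comp f sqrt s (f' s) _ (Hf s Hs)
                  (derivable_pt_lim_sqrt _ (Hp s Hs))) as Hd.
    assert (sqrt (f s) > 0) by (apply sqrt_lt_R0; apply Hp; auto).
    replace (f' s * (/ 2 * / sqrt (f s))) with (/ (2 * sqrt (f s)) * f' s) by (field; lra).
    exact Hd.
  - apply Ck_mult; auto. apply Ck_mult; [apply Ck_const|].
    apply Ck_inv; auto. intros s Hs. apply Rgt_not_eq, sqrt_lt_R0, Hp; auto.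
Qed.

Lemma Ck_sum m N (F : nat -> R -> R) : (forall k, (k < N)%nat -> Ck I m (F k)) ->
  Ck I m (fun s => sumN N (fun k => F k s)).
Proof.
  induction N as [|N IH]; intros HF; simpl.
  - apply Ck_const.
  - apply Ck_plus; auto.
Qed.

Lemma smooth_Ck f : smooth_fun_on I f -> forall m, Ck I m f.
Proof.
  intros [ds [H0 Hd]] m.
  assert (Hall : forall m j, Ck I m (ds j)).
  { induction m0 as [|m0 IH]; intros j; simpl; auto. exists (ds (S j)). split; auto. }
  apply (Ck_ext m (ds O)); auto.
Qed.

Lemma Ck_cont m f s : Ck I (S m) f -> I s -> continuity_pt f s.
Proof.
  intros [f' [Hd _]] Hs. apply derivable_continuous_pt. exists (f' s). apply Hd; auto.
Qed.

Lemma normalized_derivative_smooth N (v z w : R -> vec) (a b : R -> R) :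
  (forall k, (k < N)%nat -> forall m, Ck I m (fun s => v s k)) ->
  (forall k, (k < N)%nat -> forall m, Ck I m (fun s => z s k)) ->
  (forall m, Ck I m a) ->
  (forall s, I s -> exists d, vderiv N v s d /\
      let y := vadd d (vscale (a s) (z s)) in
      b s = vnorm N y /\ b s > 0 /\ veq N (w s) (vscale (/ b s) y)) ->
  (forall k, (k < N)%nat -> forall m, Ck I m (fun s => w s k)) /\ (forall m, Ck I m b).
Proof.
  intros Hv Hz Ha Hrec.
  set (W := fun k s => b s * w s k).
  assert (HW : forall k, (k < N)%nat -> forall m, Ck I m (W k)).
  { intros k Hk m. destruct (Hv k Hk (S m)) as [v' [Hv' Hv'm]].
    apply (Ck_ext m (fun s => v' s + a s * z s k)).
    - intros s Hs. destruct (Hrec s Hs) as [d [Hd [_ [Hpos Hw]]]].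
      assert (E : d k = v' s) by (eapply uniqueness_limite; [apply Hd; auto|apply Hv'; auto]).
      unfold W. rewrite (Hw k Hk). unfold vscale, vadd. rewrite E. field. lra.
    - apply Ck_plus; auto. apply Ck_mult; auto. }
  assert (Hb_norm : forall s, I s -> b s = sqrt (sumN N (fun k => W k s * W k s))).
  { intros s Hs. destruct (Hrec s Hs) as [d [_ [Hb [Hpos Hw]]]].
    rewrite Hb at 1. unfold vnorm, dot. f_equal. apply sumN_ext. intros k Hk.
    unfold W. rewrite (Hw k Hk). unfold vscale. field. lra. }
  assert (Hb : forall m, Ck I m b).
  { intros m. apply (Ck_ext m (fun s => sqrt (sumN N (fun k => W k s * W k s)))).
    - intros s Hs. symmetry. apply Hb_norm; auto.
    - apply Ck_sqrt.
      + intros s Hs. destruct (Hrec s Hs) as [d [_ [_ [Hpos _]]]].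
        destruct (Rle_or_lt (sumN N (fun k => W k s * W k s)) 0) as [Hl|Hl]; auto.
        rewrite (Hb_norm s Hs), sqrt_neg_0 in Hpos; auto; lra.
      + apply Ck_sum. intros k Hk. apply Ck_mult; auto. }
  split; auto.
  intros k Hk m. apply (Ck_ext m (fun s => W k s * / b s)).
  - intros s Hs. destruct (Hrec s Hs) as [d [_ [_ [Hpos _]]]]. unfold W. field. lra.
  - apply Ck_mult; auto. apply Ck_inv; auto.
    intros s Hs. destruct (Hrec s Hs) as [d [_ [_ [Hpos _]]]]. lra.
Qed.
End ClassCk.

Lemma frame_smooth n I gamma u kappa :
  (forall x, I x -> exists eps, eps > 0 /\ forall y, Rabs (y - x) < eps -> I y) ->
  smooth_curve (S n) I gamma -> spherical_frame n I gamma u kappa ->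
  forall j, (j <= n - 1)%nat ->
    (forall k, (k < S n)%nat -> forall m, Ck I m (fun s => u j s k)) /\
    (forall m, Ck I m (kappa j)).
Proof.
  intros HI Hg [Hu0 [Hk0 [_ [Hrec _]]]] j.
  induction j as [j IH] using (well_founded_induction Wf_nat.lt_wf). intros Hj.
  destruct j as [|j].
  - split.
    + intros k Hk m. apply (Ck_ext I HI m (fun s => gamma s k)).
      * intros t Ht. symmetry; apply Hu0; auto.
      * apply smooth_Ck; auto.
    + intros m. apply (Ck_ext I HI m (fun _ => 0)); [|apply Ck_const].
      intros t Ht; symmetry; auto.
  - destruct (IH j ltac:(lia) ltac:(lia)) as [Hv Ha].
    apply (normalized_derivative_smooth I HI (S n) (u j) (u_m2 u (S j)) _ (kappa j)); auto.
    + intros k Hk m. destruct j as [|j]; simpl.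
      * apply Ck_const.
      * apply (IH j ltac:(lia) ltac:(lia)); auto.
    + intros s Hs. destruct (Hrec (S j) s ltac:(lia) Hs) as [d Hd].
      replace (S j - 1)%nat with j in Hd by lia. eauto.
Qed.

(** * The last frame vector is the cofactor vector of the others *)

Module Cofactor.
Import all_boot all_algebra Rstruct GRing.Theory.
Local Open Scope ring_scope.

Lemma sumN_big k (f : nat -> R) : sumN k f = \sum_(i < k) f i.
Proof.
elim: k => [|k IH] /=; first by rewrite big_ord0.
by rewrite big_ord_recr /= IH.
Qed.

Lemma pow_m1 j : Rpow_def.pow (-1)%R j = (-1) ^+ j.
Proof. by rewrite RpowE. Qed.

Lemma det_succ k (M : nat -> nat -> R) : det k.+1 M = sumN k.+1 (fun j =>
  Rpow_def.pow (-1)%R j * M O j * det k (fun r c => M (S r) (if Nat.ltb c j then c else S c))).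
Proof. by []. Qed.

Lemma det_big k (M : nat -> nat -> R) : det k M = \det (\matrix_(i < k, j < k) M i j).
Proof.
elim: k M => [|k IH] M; first by rewrite det_mx00.
rewrite det_succ (expand_det_row _ ord0) sumN_big; apply: eq_bigr => j _.
rewrite IH /cofactor !mxE pow_m1 add0n mulrCA mulrA; congr (_ * \det _).
apply/matrixP => r c; rewrite !mxE /= /bump /=; congr (M _ _).
case: (ltnP c j) => h.
  by have -> : Nat.ltb c j = true by apply/Nat.ltb_lt/ltP.
have -> : Nat.ltb c j = false by apply/Nat.ltb_ge/leP.
by rewrite add1n.
Qed.

(* If U_0, ..., U_n is an orthonormal basis of R^(n+1) of determinant 1, the
   matrix with columns U_i is its own adjugate transposed, so U_n is the
   vector of signed n x n minors of U_0, ..., U_{n-1}. *)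
Lemma orthonormal_last_cofactor (n : nat) (U : nat -> vec) :
  (forall i j, le i n -> le j n -> dot (S n) (U i) (U j) = if Nat.eqb i j then 1 else 0) ->
  det (S n) (fun r c => U c r) = 1 ->
  forall k, le k n -> U n k = Rpow_def.pow (-1)%R (k + n) *
    det n (fun r c => U c (if Nat.ltb r k then r else S r)).
Proof.
move=> Horth Hdet k Hk.
set A : 'M[R]_(S n) := \matrix_(r, c) U c r.
have HA : A^T *m A = 1%:M.
  apply/matrixP => i j; rewrite !mxE.
  transitivity (dot (S n) (U i) (U j)).
    by rewrite /dot sumN_big; apply: eq_bigr => l _; rewrite !mxE.
  rewrite Horth; last 2 first.
  - by apply/leP; rewrite -ltnS.
  - by apply/leP; rewrite -ltnS.
  case: (Nat.eqb_spec i j) => h.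
    by rewrite (_ : i == j) //; apply/eqP/val_inj.
  by rewrite (_ : i == j = false) //; apply/negP => /eqP E; apply: h; rewrite E.
have Hd : \det A = 1.
  by rewrite -Hdet det_big; congr (\det _); apply/matrixP => r c; rewrite !mxE.
have Hadj : \adj A = A^T.
  have := mul_mx_adj A; rewrite Hd => E.
  by rewrite -[\adj A]mul1mx -HA -mulmxA E mulmx1.
have Hk' : (k < n.+1)%N by apply/ltP; lia.
have := congr1 (fun M : 'M[R]_(S n) => M ord_max (Ordinal Hk')) Hadj.
rewrite /= !mxE /cofactor det_big => E.
rewrite -E pow_m1; congr (_ * \det _).
apply/matrixP => r c; rewrite !mxE /= /bump.
have -> : (n <= c)%N = false by rewrite leqNgt ltn_ord.
rewrite add0n; congr (U _ _).
case: (ltnP r k) => h.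
  by have -> : Nat.ltb r k = true by apply/Nat.ltb_lt/ltP.
have -> : Nat.ltb r k = false by apply/Nat.ltb_ge/leP.
by rewrite add1n.
Qed.
End Cofactor.

Lemma sumN_cont N (F : nat -> R -> R) x : (forall k, (k < N)%nat -> continuity_pt (F k) x) ->
  continuity_pt (fun s => sumN N (fun k => F k s)) x.
Proof.
  induction N as [|N IH]; intros H; simpl.
  - apply continuity_pt_const. intros ? ?; reflexivity.
  - apply (continuity_pt_plus (fun s => sumN N (fun k => F k s)) (F N)); auto.
Qed.

Lemma det_cont m (M : R -> nat -> nat -> R) x :
  (forall r c, (r < m)%nat -> (c < m)%nat -> continuity_pt (fun s => M s r c) x) ->
  continuity_pt (fun s => det m (M s)) x.
Proof.
  revert M; induction m as [|m IH]; intros M H.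
  - apply continuity_pt_const. intros ? ?; reflexivity.
  - apply (sumN_cont (S m) (fun j s => (-1) ^ j * M s O j *
        det m (fun r c => M s (S r) (if Nat.ltb c j then c else S c)))).
    intros j Hj.
    apply (continuity_pt_mult (fun s => (-1) ^ j * M s O j)
       (fun s => det m (fun r c => M s (S r) (if Nat.ltb c j then c else S c)))).
    + apply (continuity_pt_scal (fun s => M s O j)). apply H; lia.
    + apply (IH (fun s r c => M s (S r) (if Nat.ltb c j then c else S c))).
      intros r c Hr Hc. apply H; [lia|]. destruct (Nat.ltb c j); lia.
Qed.

(* The height of the dual curve over the pole P is continuous: it equals the
   sum over k of P_k times a signed minor of the C^infinity frame u_0..u_{n-1}. *)
Lemma height_continuous n I gamma u kappa (P : vec) s0 :
  (forall x, I x -> exists eps, eps > 0 /\ forall y, Rabs (y - x) < eps -> I y) ->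
  smooth_curve (S n) I gamma -> spherical_frame n I gamma u kappa -> I s0 ->
  exists g, continuity_pt g s0 /\ forall s, I s -> g s = dot (S n) P (u n s).
Proof.
  intros HI Hg Hfr Hs0.
  set (minor k s := (-1) ^ (k + n) * det n (fun r c => u c s (if Nat.ltb r k then r else S r))).
  exists (fun s => sumN (S n) (fun k => P k * minor k s)). split.
  - apply (sumN_cont (S n) (fun k s => P k * minor k s)). intros k Hk.
    apply (continuity_pt_scal (minor k)), (continuity_pt_scal (fun s => det n _)).
    apply (det_cont n (fun s r c => u c s (if Nat.ltb r k then r else S r))).
    intros r c Hr Hc.
    destruct (frame_smooth n I gamma u kappa HI Hg Hfr c ltac:(lia)) as [Hu _].
    apply (Ck_cont I O); auto. apply Hu. destruct (Nat.ltb r k); lia.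
  - intros s Hs. unfold dot. apply sumN_ext. intros k Hk. f_equal.
    destruct Hfr as [_ [_ [_ [_ Horth]]]]. destruct (Horth s Hs) as [Ho Hd].
    symmetry. apply (Cofactor.orthonormal_last_cofactor n (fun i => u i s) Ho Hd k). lia.
Qed.

Lemma continuous_pos_near g s0 : continuity_pt g s0 -> g s0 > 0 ->
  exists d, d > 0 /\ forall s, Rabs (s - s0) < d -> g s > 0.
Proof.
  intros Hg Hpos. destruct (Hg (g s0) Hpos) as [d [Hd Hgd]].
  exists d. split; auto. intros s Hs.
  destruct (Req_dec s s0) as [->|Hne]; auto.
  assert (H : Rabs (g s - g s0) < g s0).
  { apply (Hgd s). split; [split; [exact I|auto]|exact Hs]. }
  apply Rabs_def2 in H. lra.
Qed.

(** * Smooth maps of R^N given by explicit expressions *)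

(* The class is closed under partial differentiation
   [dx], so every expression defines a C^infinity map wherever the arguments
   of the inverse square roots stay positive. *)
Inductive ex : Type :=
  | EC (c : R) | EV (i : nat) | EA (a b : ex) | EM (a b : ex) | EIS (a : ex).

Fixpoint ev (e : ex) (x : vec) : R :=
  match e with
  | EC c => c
  | EV i => x i
  | EA a b => ev a x + ev b x
  | EM a b => ev a x * ev b x
  | EIS a => / sqrt (ev a x)
  end.

Fixpoint dx (i : nat) (e : ex) : ex :=
  match e with
  | EC _ => EC 0
  | EV k => EC (if Nat.eqb k i then 1 else 0)
  | EA a b => EA (dx i a) (dx i b)
  | EM a b => EA (EM (dx i a) b) (EM a (dx i b))
  | EIS a => EM (EM (EC (-1/2)) (dx i a)) (EM (EIS a) (EM (EIS a) (EIS a)))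
  end.

Fixpoint okx (N : nat) (e : ex) (x : vec) : Prop :=
  match e with
  | EC _ => True
  | EV i => (i < N)%nat
  | EA a b => okx N a x /\ okx N b x
  | EM a b => okx N a x /\ okx N b x
  | EIS a => okx N a x /\ ev a x > 0
  end.

Fixpoint dxl (l : list nat) (e : ex) : ex :=
  match l with nil => e | cons i l' => dx i (dxl l' e) end.

Fixpoint sumE (N : nat) (F : nat -> ex) : ex :=
  match N with O => EC 0 | S N' => EA (sumE N' F) (F N') end.

Lemma ev_sumE N F x : ev (sumE N F) x = sumN N (fun j => ev (F j) x).
Proof. induction N; simpl; auto. rewrite IHN; auto. Qed.

Lemma okx_sumE M N F x : (forall j, (j < N)%nat -> okx M (F j) x) -> okx M (sumE N F) x.
Proof. induction N; simpl; auto. intros H; split; auto. Qed.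

Lemma okx_dxl N l e x : okx N e x -> okx N (dxl l e) x.
Proof.
  assert (Hdx : forall i e, okx N e x -> okx N (dx i e) x) by (induction e0; simpl; intuition).
  induction l; simpl; auto.
Qed.

Lemma derivable_pt_lim_line a b : derivable_pt_lim (fun t => a + t * b) 0 b.
Proof.
  pose proof (derivable_pt_lim_plus (fct_cte a) (fun y => id y * b) 0 0 (1 * b)
     (derivable_pt_lim_const a 0) (derivable_pt_lim_scal_right id 0 1 b (derivable_pt_lim_id 0))) as H.
  replace (0 + 1 * b) with b in H by ring. exact H.
Qed.

Lemma derivable_pt_lim_invsqrt y : y > 0 ->
  derivable_pt_lim (fun t => / sqrt t) y (-1/2 * (/ sqrt y * (/ sqrt y * / sqrt y))).
Proof.
  intros Hy. assert (Hs : sqrt y > 0) by (apply sqrt_lt_R0; auto).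
  pose proof (derivable_pt_lim_div (fct_cte 1) sqrt y 0 _ (derivable_pt_lim_const 1 y)
                (derivable_pt_lim_sqrt y Hy) ltac:(lra)) as H.
  replace (-1/2 * (/ sqrt y * (/ sqrt y * / sqrt y))) with
     ((0 * sqrt y - / (2 * sqrt y) * fct_cte 1 y) / (sqrt y)²)
    by (unfold fct_cte, Rsqr; field; lra).
  intros eps He. destruct (H eps He) as [d Hd]. exists d. intros h Hh Hl.
  specialize (Hd h Hh Hl). unfold div_fct, fct_cte, Rdiv in Hd.
  rewrite !Rmult_1_l in Hd. exact Hd.
Qed.

Lemma deriv_ev N i e x : okx N e x ->
  derivable_pt_lim (fun t => ev e (vadd x (vscale t (ebasis i)))) 0 (ev (dx i e) x).
Proof.
  assert (Hline : vadd x (vscale 0 (ebasis i)) = x)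
    by (apply functional_extensionality; intros k; unfold vadd, vscale; ring).
  induction e as [c|k|a IHa b IHb|a IHa b IHb|a IHa]; simpl; intros Hok.
  - apply (derivable_pt_lim_const c 0).
  - unfold vadd, vscale, ebasis. apply derivable_pt_lim_line.
  - destruct Hok as [Ha Hb].
    apply (derivable_pt_lim_plus (fun t => ev a (vadd x (vscale t (ebasis i))))
       (fun t => ev b (vadd x (vscale t (ebasis i))))); auto.
  - destruct Hok as [Ha Hb].
    pose proof (derivable_pt_lim_mult (fun t => ev a (vadd x (vscale t (ebasis i))))
       (fun t => ev b (vadd x (vscale t (ebasis i)))) 0 _ _ (IHa Ha) (IHb Hb)) as H.
    cbv beta in H. rewrite Hline in H. exact H.
  - destruct Hok as [Ha Hp].
    pose proof (derivable_pt_lim_comp (fun t => ev a (vadd x (vscale t (ebasis i))))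
       (fun t => / sqrt t) 0 _
       (-1/2 * (/ sqrt (ev a x) * (/ sqrt (ev a x) * / sqrt (ev a x)))) (IHa Ha)) as H.
    cbv beta in H. rewrite Hline in H. specialize (H (derivable_pt_lim_invsqrt _ Hp)).
    replace (-1 / 2 * ev (dx i a) x * (/ sqrt (ev a x) * (/ sqrt (ev a x) * / sqrt (ev a x))))
      with (-1 / 2 * (/ sqrt (ev a x) * (/ sqrt (ev a x) * / sqrt (ev a x))) * ev (dx i a) x)
      by ring.
    exact H.
Qed.

Definition contx (N : nat) (f : vec -> R) (x : vec) : Prop :=
  forall e, e > 0 -> exists d, d > 0 /\ forall y, vdist N y x < d -> Rabs (f y - f x) < e.

Lemma contx_ext N f g x : (forall y, f y = g y) -> contx N f x -> contx N g x.
Proof.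
  intros E H e He. destruct (H e He) as [d [Hd H']]. exists d; split; auto.
  intros y Hy. rewrite <- !E; auto.
Qed.

Lemma contx_const N c x : contx N (fun _ => c) x.
Proof.
  intros e He. exists 1. split; [lra|]. intros y _.
  unfold Rminus; rewrite Rplus_opp_r, Rabs_R0; lra.
Qed.

Lemma contx_var N k x : (k < N)%nat -> contx N (fun y => y k) x.
Proof.
  intros Hk e He. exists e. split; auto. intros y Hy.
  eapply Rle_lt_trans; [apply coord_le; eauto|auto].
Qed.

Lemma contx_plus N f g x : contx N f x -> contx N g x -> contx N (fun y => f y + g y) x.
Proof.
  intros Hf Hg e He. destruct (Hf (e/2) ltac:(lra)) as [d1 [Hd1 H1]].
  destruct (Hg (e/2) ltac:(lra)) as [d2 [Hd2 H2]].
  exists (Rmin d1 d2). split; [apply Rmin_pos; auto|].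
  intros y Hy. specialize (H1 y (Rlt_le_trans _ _ _ Hy (Rmin_l _ _))).
  specialize (H2 y (Rlt_le_trans _ _ _ Hy (Rmin_r _ _))).
  replace (f y + g y - (f x + g x)) with ((f y - f x) + (g y - g x)) by ring.
  eapply Rle_lt_trans; [apply Rabs_triang|lra].
Qed.

Lemma contx_comp N (h : R -> R) f x :
  continuity_pt h (f x) -> contx N f x -> contx N (fun y => h (f y)) x.
Proof.
  intros Hh Hf e He. destruct (Hh e He) as [a [Ha Hha]].
  destruct (Hf a Ha) as [d [Hd Hfd]]. exists d. split; auto.
  intros y Hy. destruct (Req_dec (f y) (f x)) as [E|E].
  - rewrite E. unfold Rminus; rewrite Rplus_opp_r, Rabs_R0; lra.
  - apply (Hha (f y)). split; [split; [exact I|auto]|]. apply Hfd; auto.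
Qed.

(* Products reduce to sums, scalings and squares by polarization:
   f g = ((f + g)^2 - (f - g)^2) / 4. *)
Lemma contx_mult N f g x : contx N f x -> contx N g x -> contx N (fun y => f y * g y) x.
Proof.
  intros Hf Hg.
  assert (Hid : forall y, continuity_pt (fun t => t) y)
    by (intros y; apply derivable_continuous_pt; exists 1; apply derivable_pt_lim_id).
  assert (Hscal : forall c y, continuity_pt (fun t => c * t) y)
    by (intros c y; apply (continuity_pt_scal (fun t => t)); auto).
  assert (Hsq : forall y, continuity_pt (fun t => t * t) y)
    by (intros y; apply (continuity_pt_mult (fun t => t) (fun t => t)); auto).
  apply (contx_ext N (fun y => / 4 * ((f y + g y) * (f y + g y)
           + (-1) * ((f y + (-1) * g y) * (f y + (-1) * g y))))); [intros y; field|].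
  apply (contx_comp N (fun t => / 4 * t)); [apply Hscal|].
  apply contx_plus.
  - apply (contx_comp N (fun t => t * t) (fun y => f y + g y)); [apply Hsq|].
    apply contx_plus; auto.
  - apply (contx_comp N (fun t => (-1) * t)); [apply Hscal|].
    apply (contx_comp N (fun t => t * t) (fun y => f y + (-1) * g y)); [apply Hsq|].
    apply contx_plus; auto. apply (contx_comp N (fun t => (-1) * t)); [apply Hscal|auto].
Qed.

Lemma contx_ev N e x : okx N e x -> contx N (ev e) x.
Proof.
  induction e as [c|k|a IHa b IHb|a IHa b IHb|a IHa]; simpl; intros Hok.
  - apply contx_const.
  - apply contx_var; auto.
  - destruct Hok; apply contx_plus; auto.
  - destruct Hok; apply contx_mult; auto.
  - destruct Hok as [Ha Hp].
    apply (contx_comp N (fun t => / sqrt t) (ev a)); auto.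
    apply (continuity_pt_inv sqrt). apply sqrt_continuity_pt; auto.
    apply Rgt_not_eq, sqrt_lt_R0; auto.
Qed.

Lemma smooth_ex N (U : vec -> Prop) (E : nat -> ex) :
  (forall k x, (k < N)%nat -> U x -> okx N (E k) x) ->
  smooth_vmap_on N U (fun x k => ev (E k) x).
Proof.
  intros Hok k Hk. exists (fun l x => ev (dxl l (E k)) x). split; [|split].
  - intros x _; reflexivity.
  - intros l i x Hi Hx. simpl. apply (deriv_ev N). apply okx_dxl; auto.
  - intros l x Hx e He.
    destruct (contx_ev N (dxl l (E k)) x (okx_dxl _ _ _ _ (Hok k x Hk Hx)) e He)
      as [d [Hd H]]. exists d. split; auto.
Qed.

(** * The reflection charts *)

Section Charts.
Variables (N : nat) (P : vec).

(* For signs tau, eps:  chart x = eps (x + tau P) / |x + tau P|  and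
   refl y = tau (2 (P.y) y - P), written as expressions to get smoothness. *)
Definition shift_ex (tau : R) (j : nat) : ex := EA (EV j) (EC (tau * P j)).
Definition chart_ex (tau eps : R) (k : nat) : ex :=
  EM (EC eps) (EM (shift_ex tau k)
    (EIS (sumE N (fun j => EM (shift_ex tau j) (shift_ex tau j))))).
Definition refl_ex (tau : R) (k : nat) : ex :=
  EM (EC tau) (EA (EM (EM (EC 2) (sumE N (fun j => EM (EC (P j)) (EV j)))) (EV k)) (EC (- P k))).

Definition chart (tau eps : R) (x : vec) : vec := fun k => ev (chart_ex tau eps k) x.
Definition refl (tau : R) (y : vec) : vec := fun k => ev (refl_ex tau k) y.

Definition shift_sq (tau : R) (x : vec) : R :=
  dot N (fun j => x j + tau * P j) (fun j => x j + tau * P j).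

Lemma chart_eq tau eps x k :
  chart tau eps x k = eps * (x k + tau * P k) * / sqrt (shift_sq tau x).
Proof. unfold chart, chart_ex; simpl. rewrite ev_sumE. unfold shift_sq, dot. simpl. ring. Qed.

Lemma refl_eq tau y k : refl tau y k = tau * (2 * dot N P y * y k - P k).
Proof. unfold refl, refl_ex; simpl. rewrite ev_sumE. unfold dot. simpl. ring. Qed.

Lemma chart_smooth tau eps (U : vec -> Prop) :
  (forall x, U x -> shift_sq tau x > 0) -> smooth_vmap_on N U (chart tau eps).
Proof.
  intros HU. apply smooth_ex. intros k x Hk Hx. simpl. repeat split; auto.
  - apply okx_sumE. intros j Hj. simpl. tauto.
  - rewrite ev_sumE. apply HU; auto.
Qed.

Lemma refl_smooth tau (U : vec -> Prop) : smooth_vmap_on N U (refl tau).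
Proof.
  apply smooth_ex. intros k x Hk _. simpl. repeat split; auto.
  apply okx_sumE. intros j Hj. simpl. tauto.
Qed.

Lemma shift_sq_expand tau x :
  shift_sq tau x = dot N x x + 2 * tau * dot N P x + tau * tau * dot N P P.
Proof.
  transitivity (dot N (fun j => 1 * x j + tau * P j) (fun j => 1 * x j + tau * P j)).
  - unfold shift_sq, dot. apply sumN_ext; intros; ring.
  - rewrite dot_comb, (dot_sym N x P). ring.
Qed.

Hypothesis P_unit : on_sphere N P.

Lemma refl_chart tau eps x : tau * tau = 1 -> eps * eps = 1 ->
  on_sphere N x -> shift_sq tau x > 0 ->
  on_sphere N (chart tau eps x) /\ veq N (refl tau (chart tau eps x)) x.
Proof.
  unfold on_sphere in *. intros Htau Heps Hx Hm.
  assert (Em : shift_sq tau x = 2 * tau * (tau + dot N P x))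
    by (rewrite shift_sq_expand, Hx, P_unit; nra).
  set (q := / sqrt (shift_sq tau x)).
  assert (Hq : q * q * shift_sq tau x = 1).
  { unfold q. rewrite <- Rinv_mult, sqrt_sqrt by lra. field. lra. }
  assert (Hkey : 2 * (q * q) * (dot N P x + tau) = tau).
  { transitivity (tau * (q * q * shift_sq tau x)); [|rewrite Hq; ring].
    rewrite Em. transitivity (2 * (q * q) * (dot N P x + tau) * (tau * tau)); [rewrite Htau|]; ring. }
  assert (Hch : forall k, chart tau eps x k = (eps * q) * x k + (eps * tau * q) * P k)
    by (intros k; rewrite chart_eq; fold q; ring).
  assert (Hdot : dot N P (chart tau eps x) = (eps * q) * dot N P x + (eps * tau * q) * 1).
  { rewrite <- P_unit, <- dot_lin. apply sumN_ext. intros k _. rewrite Hch. ring. }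
  split.
  - unfold on_sphere, dot.
    rewrite (sumN_ext _ _ (fun j => ((eps * q) * x j + (eps * tau * q) * P j) *
                                    ((eps * q) * x j + (eps * tau * q) * P j)))
      by (intros; rewrite Hch; ring).
    fold (dot N (fun j => (eps * q) * x j + (eps * tau * q) * P j)
                (fun j => (eps * q) * x j + (eps * tau * q) * P j)).
    rewrite dot_comb, Hx, P_unit, (dot_sym N x P).
    transitivity ((eps * eps) * (q * q * shift_sq tau x)).
    + rewrite shift_sq_expand, Hx, P_unit. ring.
    + rewrite Heps, Hq. ring.
  - intros k Hk. rewrite refl_eq, Hdot, Hch.
    transitivity (tau * ((eps * eps) * (2 * (q * q) * (dot N P x + tau)) * (x k + tau * P k) - P k));
      [ring|].
    rewrite Heps, Hkey.
    transitivity ((tau * tau) * x k + ((tau * tau) - 1) * tau * P k); [ring|].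
    rewrite Htau. ring.
Qed.

Lemma chart_refl tau eps y : tau * tau = 1 -> eps * eps = 1 ->
  on_sphere N y -> eps * tau * dot N P y > 0 ->
  on_sphere N (refl tau y) /\ veq N (chart tau eps (refl tau y)) y.
Proof.
  unfold on_sphere in *. intros Htau Heps Hy Hpos. set (c := dot N P y) in *.
  assert (Hr : forall k, refl tau y k = (2 * tau * c) * y k + (- tau) * P k)
    by (intros k; rewrite refl_eq; fold c; ring).
  assert (Hsh : shift_sq tau (refl tau y) = (2 * eps * tau * c) * (2 * eps * tau * c)).
  { unfold shift_sq.
    transitivity (dot N (fun j => (2 * tau * c) * y j + 0 * P j) (fun j => (2 * tau * c) * y j + 0 * P j)).
    - unfold dot; apply sumN_ext; intros; rewrite Hr; ring.
    - rewrite dot_comb, Hy.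
      transitivity ((eps * eps) * ((2 * tau * c) * (2 * tau * c))); [rewrite Heps|]; ring. }
  split.
  - unfold dot. rewrite (sumN_ext _ _ (fun j => ((2 * tau * c) * y j + (- tau) * P j) *
                                             ((2 * tau * c) * y j + (- tau) * P j)))
      by (intros; rewrite Hr; ring).
    fold (dot N (fun j => (2 * tau * c) * y j + (- tau) * P j)
                (fun j => (2 * tau * c) * y j + (- tau) * P j)).
    rewrite dot_comb, Hy, P_unit, (dot_sym N y P). fold c.
    transitivity (tau * tau); [ring|exact Htau].
  - intros k Hk. rewrite chart_eq, Hsh, sqrt_square by lra. rewrite Hr.
    assert (eps <> 0 /\ tau <> 0 /\ c <> 0) as (? & ? & ?)
      by (repeat split; intro E; rewrite E in Hpos; lra).
    field. auto.
Qed.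

Lemma refl_orthotomic y : refl (-1) y = vsub P (vscale (2 * dot N P y) y).
Proof.
  apply functional_extensionality. intros k. rewrite refl_eq. unfold vsub, vscale. ring.
Qed.

Lemma orthotomic_shift_sq tau v : on_sphere N v ->
  shift_sq tau (vsub P (vscale (2 * dot N P v) v)) =
  (1 + tau) * (1 + tau) - 4 * tau * (dot N P v * dot N P v).
Proof.
  unfold on_sphere in *. intros Hv. unfold shift_sq.
  transitivity (dot N (fun j => (1 + tau) * P j + (-2 * dot N P v) * v j)
                      (fun j => (1 + tau) * P j + (-2 * dot N P v) * v j)).
  - apply dot_veq; intros j _; unfold vsub, vscale; ring.
  - rewrite dot_comb, P_unit, Hv. ring.
Qed.

Lemma chart_orthotomic_pedal v : on_sphere N v -> dot N P v * dot N P v < 1 ->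
  veq N (chart 1 1 (vsub P (vscale (2 * dot N P v) v)))
        (vscale (/ sqrt (1 - dot N P v ^ 2)) (vsub P (vscale (dot N P v) v))).
Proof.
  intros Hv Hc k Hk. rewrite chart_eq, (orthotomic_shift_sq 1 v Hv).
  set (c := dot N P v) in *.
  set (t := sqrt (1 - c ^ 2)).
  assert (Htt : t * t = 1 - c * c) by (unfold t; rewrite sqrt_sqrt; [ring|nra]).
  assert (Ht : t > 0) by (unfold t; apply sqrt_lt_R0; nra).
  replace ((1 + 1) * (1 + 1) - 4 * 1 * (c * c)) with ((2 * t) * (2 * t))
    by (transitivity (4 * (t * t)); [ring|rewrite Htt; ring]).
  rewrite sqrt_square by lra. unfold vscale, vsub. fold c t. field. lra.
Qed.
End Charts.

Lemma sumsq_pos_near N (a z : vec) :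
  dot N (fun j => a j + z j) (fun j => a j + z j) > 0 ->
  exists r, r > 0 /\ forall x, vdist N x a < r ->
    dot N (fun j => x j + z j) (fun j => x j + z j) > 0.
Proof.
  intros H. destruct (dot_pos_coord N _ H) as [k [Hk Hak]].
  exists (Rabs (a k + z k)). split; [apply Rabs_pos_lt; auto|].
  intros x Hx.
  assert (Hxk : x k + z k <> 0).
  { intro E. pose proof (coord_le N a x k Hk) as Hc.
    replace (x k - a k) with (- (a k + z k)) in Hc by lra. rewrite Rabs_Ropp in Hc. lra. }
  pose proof (sumsq_ge N (fun j => x j + z j) k Hk).
  assert (0 < (x k + z k) * (x k + z k)) by (apply Rsqr_pos_lt; auto).
  unfold dot. lra.
Qed.

Lemma dot_sign_near N (P b : vec) sg : on_sphere N P -> sg * sg = 1 -> sg * dot N P b > 0 ->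
  exists r, r > 0 /\ forall y, vdist N y b < r -> sg * dot N P y > 0.
Proof.
  intros HP Hsg Hb. pose proof (pos_INR N).
  set (r := sg * dot N P b / (INR N + 1)).
  assert (Hr : r * (INR N + 1) = sg * dot N P b) by (unfold r; field; lra).
  assert (Hsg1 : Rabs sg = 1).
  { destruct (Rle_or_lt 0 sg); [rewrite Rabs_right|rewrite Rabs_left]; nra. }
  exists r. split; [nra|].
  intros y Hy. pose proof (dot_near N P b y r HP Hy) as Hd.
  assert (Hdiff : Rabs (sg * dot N P y - sg * dot N P b) <= INR N * r).
  { replace (sg * dot N P y - sg * dot N P b) with (sg * (dot N P y - dot N P b)) by ring.
    rewrite Rabs_mult, Hsg1. lra. }
  rewrite Rabs_minus_sym in Hdiff.
  pose proof (Rle_abs (sg * dot N P b - sg * dot N P y)). nra.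
Qed.

Lemma chart_L_equiv N I s0 (P : vec) tau eps (f g : R -> vec) :
  on_sphere N P -> tau * tau = 1 -> eps * eps = 1 -> I s0 ->
  shift_sq N P tau (f s0) > 0 -> eps * tau * dot N P (g s0) > 0 ->
  (exists d, d > 0 /\ forall s, I s -> Rabs (s - s0) < d ->
     veq N (g s) (chart N P tau eps (f s))) ->
  L_equiv N I s0 f g.
Proof.
  intros HP Htau Heps Hs0 Hf Hg [d [Hd Hfg]].
  assert (Hsg : (eps * tau) * (eps * tau) = 1)
    by (transitivity ((eps * eps) * (tau * tau)); [ring|rewrite Heps, Htau; ring]).
  destruct (sumsq_pos_near N (f s0) (fun j => tau * P j) Hf) as [r1 [Hr1 Hball1]].
  destruct (dot_sign_near N P (g s0) (eps * tau) HP Hsg Hg) as [r2 [Hr2 Hball2]].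
  exists (chart N P tau eps). split; [|exists d; split; auto].
  exists (refl N P tau), r1, r2.
  split; [auto|]. split; [auto|].
  split; [apply chart_smooth; intros x Hx; apply Hball1, Hx|].
  split; [apply refl_smooth|].
  split; [|split].
  - intros k Hk. symmetry. apply Hfg; auto. unfold Rminus. rewrite Rplus_opp_r, Rabs_R0. lra.
  - intros x Hx Hb. apply refl_chart; [exact HP|exact Htau|exact Heps|exact Hx|apply Hball1, Hb].
  - intros y Hy Hb. apply chart_refl; [exact HP|exact Htau|exact Heps|exact Hy|apply Hball2, Hb].
Qed.

Lemma off_pole_dot_sq N (P v : vec) : on_sphere N P -> on_sphere N v ->
  ~ veq N P v -> ~ veq N P (vopp v) -> dot N P v * dot N P v < 1.
Proof.
  unfold on_sphere. intros HP Hv Hn1 Hn2. set (c := dot N P v).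
  assert (Hz : dot N (fun j => 1 * P j + (- c) * v j) (fun j => 1 * P j + (- c) * v j) = 1 - c * c)
    by (rewrite dot_comb, HP, Hv; fold c; ring).
  assert (Hnn : 0 <= 1 - c * c) by (rewrite <- Hz; apply dot_self_nonneg).
  destruct (Rle_lt_or_eq_dec _ _ Hnn) as [Hlt|Heq]; [lra|exfalso].
  pose proof (dot_zero N _ (eq_trans Hz (eq_sym Heq))) as Hzero. simpl in Hzero.
  assert (Hc : c = 1 \/ c = -1) by (destruct (Rle_or_lt 0 c); [left|right]; nra).
  destruct Hc as [E|E]; [apply Hn1|apply Hn2]; intros k Hk; specialize (Hzero k Hk);
    rewrite E in Hzero; unfold vopp, vscale; lra.
Qed.

Lemma orthotomic_pedal_L_equiv N I (v : R -> vec) (P : vec) s0 (h : R -> R) :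
  on_sphere N P -> (forall s, I s -> on_sphere N (v s)) -> I s0 ->
  continuity_pt h s0 -> (forall s, I s -> h s = dot N P (v s)) ->
  ~ veq N P (v s0) -> ~ veq N P (vopp (v s0)) ->
  (exists eps, eps > 0 /\ forall s, I s -> Rabs (s - s0) < eps ->
      dot N P (v s) <> 1 /\ dot N P (v s) <> -1) /\
  L_equiv N I s0 (orthotomic N v P) (pedal N v P).
Proof.
  intros HP Hv Hs0 Hh Hhv Hn1 Hn2.
  pose proof (off_pole_dot_sq N P (v s0) HP (Hv s0 Hs0) Hn1 Hn2) as Hc0.
  destruct (continuous_pos_near (fun s => 1 - h s * h s) s0) as [d [Hd Hnear]].
  - apply continuity_pt_minus; [apply continuity_pt_const; intros ? ?; reflexivity|].
    apply continuity_pt_mult; exact Hh.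
  - rewrite Hhv; auto. lra.
  - assert (Hsq : forall s, I s -> Rabs (s - s0) < d -> dot N P (v s) * dot N P (v s) < 1)
      by (intros s Hs Hds; specialize (Hnear s Hds); rewrite Hhv in Hnear; auto; lra).
    split.
    + exists d. split; auto. intros s Hs Hds. specialize (Hsq s Hs Hds).
      split; intro E; rewrite E in Hsq; lra.
    + apply (chart_L_equiv N I s0 P 1 1); auto; try lra.
      * unfold orthotomic. rewrite orthotomic_shift_sq; auto. lra.
      * set (c := dot N P (v s0)) in *. set (t := sqrt (1 - c ^ 2)).
        assert (Ht : t > 0) by (unfold t; apply sqrt_lt_R0; nra).
        unfold pedal. fold c t.
        rewrite (dot_veq N P P _ (fun j => / t * P j + (- / t * c) * v s0 j)),
          dot_lin, HP by (intros j _; unfold vscale, vsub; ring). fold c.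
        apply (Rmult_lt_reg_r t); [lra|].
        replace ((1 * 1) * (/ t * 1 + - / t * c * c) * t) with (1 - c * c) by (field; lra).
        lra.
      * exists d. split; auto. intros s Hs Hds k Hk. symmetry.
        apply (chart_orthotomic_pedal N P HP (v s)); auto.
Qed.

Lemma orthotomic_dual_L_equiv N I (v : R -> vec) (P : vec) s0 (h : R -> R) :
  on_sphere N P -> (forall s, I s -> on_sphere N (v s)) -> I s0 ->
  continuity_pt h s0 -> (forall s, I s -> h s = dot N P (v s)) ->
  veq N P (v s0) \/ veq N P (vopp (v s0)) ->
  L_equiv N I s0 (orthotomic N v P) v.
Proof.
  intros HP Hv Hs0 Hh Hhv Hpole.
  assert (Hsg : exists sg, sg * sg = 1 /\ veq N P (vscale sg (v s0))).
  { destruct Hpole as [E|E]; [exists 1|exists (-1)]; split; try ring; intros k Hk; rewrite E; auto.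
    unfold vscale; ring. }
  destruct Hsg as [sg [Hsg HPv]].
  assert (Hc0 : dot N P (v s0) = sg).
  { rewrite (dot_veq N P (vscale sg (v s0)) (v s0) (v s0)); auto; [|intros ? ?; reflexivity].
    rewrite dot_sym. unfold dot, vscale.
    transitivity (sg * dot N (v s0) (v s0)); [|rewrite (Hv s0 Hs0); ring].
    unfold dot. clear. induction N; simpl; [ring|]. rewrite IHN; ring. }
  destruct (continuous_pos_near (fun s => sg * h s) s0) as [d [Hd Hnear]].
  - apply continuity_pt_scal. exact Hh.
  - simpl. rewrite Hhv, Hc0; auto. lra.
  - apply (chart_L_equiv N I s0 P (-1) (- sg)); auto; try ring.
    + nra.
    + unfold orthotomic. rewrite orthotomic_shift_sq, Hc0; auto. nra.
    + rewrite Hc0. nra.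
    + exists d. split; auto. intros s Hs Hds k Hk.
      assert (Hpos : - sg * -1 * dot N P (v s) > 0)
        by (specialize (Hnear s Hds); simpl in Hnear; rewrite Hhv in Hnear; auto; nra).
      destruct (chart_refl N P HP (-1) (- sg) (v s) ltac:(ring) ltac:(nra) (Hv s Hs) Hpos)
        as [_ Hinv].
      unfold orthotomic. rewrite <- refl_orthotomic. symmetry. apply Hinv, Hk.
Qed.

Theorem theorem1 (n : nat) (I : R -> Prop) (gamma : R -> vec)
  (u : nat -> R -> vec) (kappa : nat -> R -> R) (P : vec) (s0 : R) :
  (2 <= n)%nat ->
  is_open_interval I ->
  smooth_curve (S n) I gamma ->
  (forall s, I s -> on_sphere (S n) (gamma s)) ->
  spherical_frame n I gamma u kappa ->
  on_sphere (S n) P ->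
  I s0 ->
  ((~ veq (S n) P (u n s0) /\ ~ veq (S n) P (vopp (u n s0))) ->
     (exists eps, eps > 0 /\ forall s, I s -> Rabs (s - s0) < eps ->
         dot (S n) P (u n s) <> 1 /\ dot (S n) P (u n s) <> -1) /\
     L_equiv (S n) I s0 (orthotomic (S n) (u n) P) (pedal (S n) (u n) P)) /\
  ((veq (S n) P (u n s0) \/ veq (S n) P (vopp (u n s0))) ->
     L_equiv (S n) I s0 (orthotomic (S n) (u n) P) (u n)).
Proof.
  intros _ [_ [_ HI]] Hg _ Hfr HP Hs0.
  assert (Hdual : forall s, I s -> on_sphere (S n) (u n s)).
  { intros s Hs. destruct Hfr as [_ [_ [_ [_ Horth]]]]. destruct (Horth s Hs) as [Ho _].
    unfold on_sphere. rewrite Ho, Nat.eqb_refl; auto. }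
  destruct (height_continuous n I gamma u kappa P s0 HI Hg Hfr Hs0) as [h [Hh Hhu]].
  split.
  - intros [Hn1 Hn2]. apply (orthotomic_pedal_L_equiv (S n) I (u n) P s0 h); auto.
  - intros Hpole. apply (orthotomic_dual_L_equiv (S n) I (u n) P s0 h); auto.
Qed.
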